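(* Let $\succ=(\succ_s)_{s\in S}$ be a priority profile in which every $\succ_s$ is acyclic, and let $C:S\rightrightarrows I\times I$ be any correspondence. Then there exists a matching that is partially stable for $(\succ,C)$.
   Context: A binary relation $B$ on $X$ is asymmetric if $(x,y)\in B$ implies $(y,x)\notin B$; acyclic if for all $K\ge2$ and $x_0,\dots,x_K\in X$, [$(x_{k-1},x_k)\in B$ and $(x_k,x_{k-1})\notin B$ for all $k$] implies $(x_K,x_0)\notin B$. School choice setup: $I$ finite set of students ($|I|\ge 3$), $S$ finite set of schools; each student $i$ has a total order $P_i$ on $S\cup\{\emptyset\}$ ($sR_is'$ means $sP_is'$ or $s=s'$); each school $s$ has capacity $q_s\in\mathbb{Z}_{++}$ and an asymmetric priority relation $\succ_s$ on $I$. A matching $\mu$ assigns each $i$ to $\mu(i)\in S\cup\{\emptyset\}$ with $|\mu(s)|\le q_s$, $\mu(s)=\{i:\mu(i)=s\}$. $\mu$ is individually rational if $\mu(i)R_i\emptyset$ for all $i$, non-wasteful if $sP_i\mu(i)$ implies $|\mu(s)|=q_s$. $C(s)\subseteq I\times I$ lists pairs $(i,j)$ whose priority at $s$ may be violated. A matching $\mu$ is partially stable for $(\succ,C)$ if it is individually rational, non-wasteful, and for all $i,j\in I$ and $s\in S$: if $\mu(j)=s$, $sP_i\mu(i)$ and $(i,j)\in\succ_s$, then $(i,j)\in C(s)$. *)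

From mathcomp Require Import all_boot.
Set Implicit Arguments. Unset Strict Implicit. Unset Printing Implicit Defensive.

Definition asymmetric (X : Type) (B : rel X) : Prop :=
  forall x y, B x y -> ~~ B y x.

Definition acyclic (X : Type) (B : rel X) : Prop :=
  forall (K : nat) (x : nat -> X), 2 <= K ->
    (forall k, 1 <= k <= K -> B (x k.-1) (x k) && ~~ B (x k) (x k.-1)) ->
    ~~ B (x K) (x 0).

Definition strict_total_order (X : eqType) (P : rel X) : Prop :=
  [/\ irreflexive P, transitive P & forall x y, x != y -> P x y || P y x].

Section School.
Variables (I S : finType).
(* None stands for the outside option \emptyset. *)
Variable P : I -> rel (option S).          (* P i a b  <=>  a P_i b *)
Variable q : S -> nat.
Variable prio : S -> rel I.                (* prio s i j <=> (i,j) \in \succ_s *)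
Variable C : S -> rel I.                   (* C s i j <=> (i,j) \in C(s) *)

Definition R (i : I) (a b : option S) : bool := P i a b || (a == b).

Definition assigned (mu : I -> option S) (s : S) : {set I} :=
  [set i | mu i == Some s].

Definition is_matching (mu : I -> option S) : Prop :=
  forall s, #|assigned mu s| <= q s.

Definition individually_rational (mu : I -> option S) : Prop :=
  forall i, R i (mu i) None.

Definition non_wasteful (mu : I -> option S) : Prop :=
  forall i s, P i (Some s) (mu i) -> #|assigned mu s| = q s.

Definition partially_stable (mu : I -> option S) : Prop :=
  [/\ individually_rational mu, non_wasteful mu &
      forall i j s, mu j = Some s -> P i (Some s) (mu i) -> prio s i j ->
        C s i j].
End School.

From mathcomp Require Import all_boot.
From mathcomp Require Import zify.

(* In fact we build a matching that is partially stable for every C: one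
   that is feasible, individually rational, non-wasteful and has no justified
   envy at all ("stable").  The argument is an improvement procedure.

   1. An asymmetric acyclic relation on a finite type has, in every nonempty
      set W, an element not dominated by any member of W.  Otherwise, picking
      a dominator repeatedly would, by pigeonhole, run around a cycle, and
      unrolling that cycle three times yields a chain forbidden by acyclicity.
   2. Start from the empty matching, which is stable.  If a stable matching
      wastes a seat at s, among the students who prefer s to their assignment
      pick one, [top], undominated in the priority at s, and move [top] to s.
      The result is still stable and strictly decreases the "deficiency":
      the number of pairs (i, o) where i prefers option o to its assignment.
   3. Induction on the deficiency gives a stable non-wasteful matching, which
      is partially stable for any correspondence C. *)

Lemma iter_eventually_periodic {T : finType} (g : T -> T) (x : T) :
  exists a p, 0 < p /\ iter (p + a) g x = iter a g x.
Proof.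
pose orbit_pt (n : 'I_#|T|.+1) := iter n g x.
have /injectivePn [i [j neq_ij eq_ij]] : ~~ injectiveb orbit_pt.
  by apply/negP => /injectiveP/leq_card; rewrite card_ord ltnn.
have [lt_ij | lt_ji | /val_inj eq] := ltngtP i j; last by rewrite eq eqxx in neq_ij.
- by exists i, (j - i); rewrite subn_gt0 subnK ?(ltnW lt_ij).
- by exists j, (i - j); rewrite subn_gt0 subnK ?(ltnW lt_ji).
Qed.

Lemma acyclic_no_periodic_descent {T : Type} {B : rel T} (g : T -> T) (y : T)
    (p : nat) :
  asymmetric B -> acyclic B -> 0 < p -> iter p g y = y ->
  ~ (forall n, B (iter n.+1 g y) (iter n g y)).
Proof.
move=> asyB acyB p_gt0 periodic descent.
have iter_period n : iter (n * p) g y = y.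
  by elim: n => [|n IHn] //; rewrite mulSn iterD IHn periodic.
(* The chain x_m = iter (3p - m) g y for m = 0 .. 3p - 1 descends along B. *)
have := acyB (3 * p - 1) (fun m => iter (3 * p - m) g y).
have chain k : 1 <= k <= 3 * p - 1 ->
    B (iter (3 * p - k.-1) g y) (iter (3 * p - k) g y) &&
    ~~ B (iter (3 * p - k) g y) (iter (3 * p - k.-1) g y).
  move=> /andP [k_ge1 k_le]; have -> : 3 * p - k.-1 = (3 * p - k).+1 by lia.
  by have Bk := descent (3 * p - k); rewrite Bk (asyB _ _ Bk).
have -> : 3 * p - (3 * p - 1) = 1 by lia.
by move/(_ ltac:(lia) chain); rewrite subn0 iter_period (descent 0).
Qed.

Lemma acyclic_undominated {T : finType} {B : rel T} {W : {set T}} :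
  asymmetric B -> acyclic B -> W != set0 ->
  exists2 top, top \in W & forall k, k \in W -> ~~ B k top.
Proof.
move=> asyB acyB /set0Pn [k0 k0W].
have [/exists_inP [top topW /forall_inP undom] | no_top] :=
  boolP [exists top in W, [forall k in W, ~~ B k top]].
  by exists top.
have dominated k : k \in W -> exists2 k', k' \in W & B k' k.
  move=> kW; move/exists_inPn: no_top => /(_ k kW) /forall_inPn [k' k'W].
  by rewrite negbK; exists k'.
pose g k := odflt k [pick k' in W | B k' k].
have g_dom k : k \in W -> (g k \in W) && B (g k) k.
  move=> /dominated [k' k'W Bk']; rewrite /g.
  case: pickP => [k'' /andP [-> ->] // | none].
  by move: (none k'); rewrite k'W Bk'.
have iter_in n k : k \in W -> iter n g k \in W.
  by move=> kW; elim: n => //= n /g_dom /andP [].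
have [a [p [p_gt0 period]]] := iter_eventually_periodic g k0.
apply: False_ind; apply: (acyclic_no_periodic_descent g (iter a g k0) p asyB acyB p_gt0).
  by rewrite -iterD.
by move=> n; have /andP [] := g_dom _ (iter_in n _ (iter_in a _ k0W)).
Qed.

Section Improvement.
Variables (I S : finType).
Variable P : I -> rel (option S).
Variable q : S -> nat.
Variable prio : S -> rel I.
Hypothesis P_irr : forall i, irreflexive (P i).
Hypothesis P_trans : forall i, transitive (P i).

Definition no_justified_envy (mu : I -> option S) : Prop :=
  forall i j s, mu j = Some s -> P i (Some s) (mu i) -> ~~ prio s i j.

Definition stable (mu : I -> option S) : Prop :=
  [/\ is_matching q mu, individually_rational P mu & no_justified_envy mu].

Definition deficiency (mu : I -> option S) : nat :=
  \sum_i #|[set o | P i o (mu i)]|.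

Definition reassign (mu : I -> option S) (top : I) (s : S) : I -> option S :=
  fun k => if k == top then Some s else mu k.

Lemma stable_unmatched : stable (fun _ => None).
Proof.
split=> [s | i | i j s //].
- by rewrite (_ : assigned _ _ = set0) ?cards0 //; apply/setP => i; rewrite !inE.
- by rewrite /R eqxx orbT.
Qed.

Section Reassign.
Variables (mu : I -> option S) (s : S) (top : I).
Hypothesis mu_stable : stable mu.
Hypothesis seat_free : #|assigned mu s| < q s.
Hypothesis top_wants : P top (Some s) (mu top).
Hypothesis top_undominated :
  forall k, P k (Some s) (mu k) -> ~~ prio s k top.

Lemma reassign_matching : is_matching q (reassign mu top s).
Proof.
case: mu_stable => cap _ _ s'.
have [-> | neq_s] := eqVneq s' s.
  apply: leq_trans seat_free; apply: (@leq_trans #|top |: assigned mu s|).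
    apply/subset_leq_card/subsetP => k; rewrite !inE /reassign.
    by case: (k == top).
  by rewrite cardsU1; case: (_ \notin _).
apply: leq_trans (cap s'); apply/subset_leq_card/subsetP => k.
rewrite !inE /reassign; case: (k == top) => //.
by move/eqP => [eq_s]; rewrite eq_s eqxx in neq_s.
Qed.

Lemma reassign_rational : individually_rational P (reassign mu top s).
Proof.
case: mu_stable => _ rational _ k; rewrite /reassign.
have [-> | _] := eqVneq k top; last exact: rational.
case/orP: (rational top) => [worse | /eqP eq_none]; rewrite /R.
  by rewrite (P_trans _ _ _ _ top_wants worse).
by rewrite -eq_none top_wants.
Qed.

Lemma reassign_no_envy : no_justified_envy (reassign mu top s).
Proof.
case: mu_stable => _ _ no_envy k j s'; rewrite /reassign.
have [-> [<-] | _ assigned_j] := eqVneq j top.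
  have [-> | _ wants] := eqVneq k top; first by rewrite P_irr.
  exact: top_undominated.
have [-> wants | _] := eqVneq k top; last exact: no_envy.
exact: no_envy assigned_j (P_trans _ _ _ _ wants top_wants).
Qed.

Lemma reassign_deficiency : deficiency (reassign mu top s) < deficiency mu.
Proof.
rewrite /deficiency (bigD1 top) //= [X in _ < X](bigD1 top) //=.
rewrite (eq_bigr (fun k => #|[set o | P k o (mu k)]|)); last first.
  by move=> k /negbTE k_top; rewrite /reassign k_top.
rewrite ltn_add2r /reassign eqxx; apply: proper_card; rewrite properE.
apply/andP; split.
  by apply/subsetP => o; rewrite !inE => better; apply: P_trans _ _ _ _ better top_wants.
by apply/subsetPn; exists (Some s); rewrite !inE ?top_wants ?P_irr.
Qed.

End Reassign.

Lemma wasteful_improvable {mu : I -> option S} {i : I} {s : S} :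
  asymmetric (prio s) -> acyclic (prio s) -> stable mu ->
  P i (Some s) (mu i) -> #|assigned mu s| != q s ->
  exists2 mu', stable mu' & deficiency mu' < deficiency mu.
Proof.
move=> asy acy mu_stable wants_i wasted.
have seat_free : #|assigned mu s| < q s.
  by case: mu_stable => cap _ _; rewrite ltn_neqAle wasted cap.
have nonempty : [set k | P k (Some s) (mu k)] != set0.
  by apply/set0Pn; exists i; rewrite inE.
have [top] := acyclic_undominated asy acy nonempty; rewrite inE => top_wants undom.
have top_undominated k : P k (Some s) (mu k) -> ~~ prio s k top.
  by move=> wants; apply: undom; rewrite inE.
exists (reassign mu top s); last exact: reassign_deficiency.
split; [exact: reassign_matching | exact: reassign_rational |
        exact: reassign_no_envy mu_stable top_wants top_undominated].
Qed.

Lemma stable_non_wasteful_exists :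
  (forall s, asymmetric (prio s)) -> (forall s, acyclic (prio s)) ->
  exists2 mu, stable mu & non_wasteful P q mu.
Proof.
move=> asy acy.
suff: forall n mu, deficiency mu < n -> stable mu ->
        exists2 mu', stable mu' & non_wasteful P q mu'.
  by apply; [apply: ltnSn | apply: stable_unmatched].
elim=> // n IHn mu small mu_stable.
have [/existsP [i /existsP [s /andP [wants wasted]]] | no_waste] :=
  boolP [exists i, exists s, P i (Some s) (mu i) && (#|assigned mu s| != q s)].
  have [mu' mu'_stable better] :=
    wasteful_improvable (asy s) (acy s) mu_stable wants wasted.
  by apply: IHn mu'_stable; apply: leq_trans better small.
exists mu => // i s wants; apply/eqP.
by move: no_waste => /existsPn /(_ i) /existsPn /(_ s); rewrite wants negbK.
Qed.

Lemma stable_partially_stable (C : S -> rel I) (mu : I -> option S) :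
  stable mu -> non_wasteful P q mu -> partially_stable P q prio C mu.
Proof.
case=> _ rational no_envy non_wasteful; split=> // i j s assigned_j wants.
by move/negP: (no_envy i j s assigned_j wants).
Qed.

End Improvement.

Theorem corollary7 (I S : finType) (P : I -> rel (option S)) (q : S -> nat)
  (prio : S -> rel I) (C : S -> rel I) :
  3 <= #|I| ->
  (forall i, strict_total_order (P i)) ->
  (forall s, 0 < q s) ->
  (forall s, asymmetric (prio s)) ->
  (forall s, acyclic (prio s)) ->
  exists mu : I -> option S,
    is_matching q mu /\ partially_stable P q prio C mu.
Proof.
move=> _ P_order _ asy acy.
have P_irr i : irreflexive (P i) by case: (P_order i).
have P_trans i : transitive (P i) by case: (P_order i).
have [mu mu_stable non_wasteful] :=
  @stable_non_wasteful_exists _ _ P q prio P_irr P_trans asy acy.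
exists mu; split; first by case: mu_stable.
exact: stable_partially_stable.
Qed.
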